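(* For fixed integers $n\ge m\ge 3$, the maximal $h$-vector $h_{max}$ of Perazzo algebras with invariants $n,m,d$ is not unimodal for all sufficiently large $d$.
   Context: $K$ algebraically closed of characteristic zero. A Perazzo form of degree $d$ is $F=X_0p_0+\dots+X_np_n+G\in K[X_0,\dots,X_n,U_1,\dots,U_m]_d$ with $p_i\in K[U_1,\dots,U_m]_{d-1}$ algebraically dependent but linearly independent, $G\in K[U_1,\dots,U_m]_d$. The maximal $h$-vector is $h_{max}=(h_0,\dots,h_d)$, symmetric, with $h_i=\min\{\alpha_i+\beta_i,\alpha_i+\gamma_i\}$ for $0\le i\le\lfloor d/2\rfloor$, where $\alpha_i=\binom{m+i-1}{m-1}$, $\beta_i=\binom{d+m-i-1}{m-1}$, $\gamma_i=(n+1)\binom{m+i-2}{m-1}$. Unimodal means $h_0\le\dots\le h_k\ge\dots\ge h_d$ for some $k$. *)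

From mathcomp Require Import all_boot.
Set Implicit Arguments. Unset Strict Implicit. Unset Printing Implicit Defensive.

Definition perazzo_alpha (m i : nat) : nat := 'C(m + i - 1, m - 1).
Definition perazzo_beta (m d i : nat) : nat := 'C(d + m - i - 1, m - 1).
Definition perazzo_gamma (n m i : nat) : nat := (n + 1) * 'C(m + i - 2, m - 1).

Definition hmax_low (n m d i : nat) : nat :=
  minn (perazzo_alpha m i + perazzo_beta m d i)
       (perazzo_alpha m i + perazzo_gamma n m i).

Definition hmax (n m d i : nat) : nat :=
  if i <= d./2 then hmax_low n m d i else hmax_low n m d (d - i).

Definition unimodal (h : nat -> nat) (d : nat) : Prop :=
  exists k, k <= d /\
    (forall i, i < k -> h i <= h i.+1) /\
    (forall i, k <= i -> i < d -> h i.+1 <= h i).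

(* At the middle index h = d/2 the minimum defining h_max is attained by
   alpha + beta: beta_i grows like (d - i)^(m-1) and gamma_i like
   (n + 1) i^(m-1) with n + 1 >= 4, so beta_(h-1) <= gamma_(h-1) once d is large
   compared to m.  For m >= 3 the sum alpha_i + beta_i is strictly decreasing
   before the middle, hence h_h < h_(h-1) = h_(d-h+1) by symmetry, and a
   strict dip at h with h-1 < h < d-h+1 rules out unimodality. *)
From mathcomp Require Import all_boot.
From mathcomp Require Import zify.

Lemma double_half_bounds d : d./2.*2 <= d <= d./2.*2 + 1.
Proof. by have := odd_double_half d; case: (odd d) => /=; lia. Qed.

Lemma leq_mul_binSn y k : 5 * k <= y.+1 -> 4 * 'C(y.+1, k) <= 5 * 'C(y, k).
Proof.
move=> hk; have pos : 0 < y.+1 - k by lia.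
rewrite -(leq_pmul2l pos) mulnCA -[_ * 'C(y.+1, k)]mul_bin_down mulnCA !mulnA.
by apply: leq_mul => //; lia.
Qed.

(* (5/4)^4 <= 4 *)
Lemma leq_bin_addn4 y k : 5 * k <= y.+1 -> 'C(y + 4, k) <= 4 * 'C(y, k).
Proof.
move=> hk; rewrite addn4.
have := @leq_mul_binSn y k hk.
have := @leq_mul_binSn y.+1 k ltac:(lia).
have := @leq_mul_binSn y.+2 k ltac:(lia).
have := @leq_mul_binSn y.+3 k ltac:(lia).
lia.
Qed.

Lemma ltn_bin2l x y r : x < y -> 0 < r -> r.-1 <= x -> 'C(x, r) < 'C(y, r).
Proof.
move=> ltxy; case: r => // r _ /= lerx.
apply: leq_trans (leq_bin2l _ ltxy).
by rewrite binS -addn1 leq_add2l bin_gt0.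
Qed.

Lemma unimodal_valley (f : nat -> nat) d a b c :
  a < b < c -> c <= d -> f b < f a -> f b < f c -> ~ unimodal f d.
Proof.
move=> /andP[ltab ltbc] lecd ltba ltbc' [k [lekd [up down]]].
have [lekb | ltbk] := leqP k b.
- have homo_down : {in [pred i | k <= i <= d] &,
      {homo f : i j / i <= j >-> j <= i}}.
    apply: homo_leq_in => [x|y x z le_xy le_yz|i j|i]; rewrite ?inE //.
    + exact: leq_trans le_yz le_xy.
    + by move=> Di Dj l; rewrite !inE in Di Dj *; lia.
    + by move=> /andP[lek _] /andP[_ led]; apply: down.
  by have := homo_down b c; rewrite !inE; lia.
- have homo_up : {in [pred i | i <= k] &, {homo f : i j / i <= j}}.
    apply: homo_leq_in => [x|y x z|i j|i]; rewrite ?inE //.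
    + exact: leq_trans.
    + by move=> Di Dj l; rewrite !inE in Di Dj *; lia.
    + by move=> _; apply: up.
  by have := homo_up a b; rewrite !inE; lia.
Qed.

Lemma hmax_sym n m d i : i <= d -> hmax n m d (d - i) = hmax n m d i.
Proof.
move=> leid; have := double_half_bounds d.
rewrite /hmax subKn //.
case: (leqP (d - i) d./2) => hdi; case: (leqP i d./2) => hi halfd //; last lia.
by have -> : d - i = i by lia.
Qed.

Lemma perazzo_beta_le_gamma n m d i :
  3 <= n -> 4 * m <= i + 4 -> d <= i.*2 + 3 ->
  perazzo_beta m d i <= perazzo_gamma n m i.
Proof.
move=> n3 mi di; rewrite /perazzo_beta /perazzo_gamma.
set y := m + i - 2.
have le_top : d + m - i - 1 <= y + 4 by lia.
apply: leq_trans (leq_bin2l _ le_top) _.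
apply: leq_trans (@leq_bin_addn4 y (m - 1) _) _; first lia.
by rewrite leq_mul2r addn1 ltnS n3 orbT.
Qed.

Lemma perazzo_alpha_beta_decr m d i : 3 <= m -> i.*2.+1 < d ->
  perazzo_alpha m i.+1 + perazzo_beta m d i.+1 <
  perazzo_alpha m i + perazzo_beta m d i.
Proof.
move=> m3 id; rewrite /perazzo_alpha /perazzo_beta.
have Em : m - 1 = (m - 2).+1 by lia.
have -> : m + i.+1 - 1 = (m + i - 1).+1 by lia.
have -> : d + m - i - 1 = (d + m - i.+1 - 1).+1 by lia.
have lt_bin : 'C(m + i - 1, m - 2) < 'C(d + m - i.+1 - 1, m - 2).
  by apply: ltn_bin2l; lia.
by rewrite Em !binS -Em; lia.
Qed.

Lemma hmax_low_decr n m d i :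
  3 <= m -> 3 <= n -> 4 * m <= i + 4 -> i.*2.+1 < d <= i.*2 + 3 ->
  hmax_low n m d i.+1 < hmax_low n m d i.
Proof.
move=> m3 n3 mi /andP[id di].
apply: leq_ltn_trans (geq_minl _ _) _.
rewrite /hmax_low (minn_idPl _); first exact: perazzo_alpha_beta_decr.
by rewrite leq_add2l perazzo_beta_le_gamma.
Qed.

Theorem theorem3p6 (n m : nat) : 3 <= m -> m <= n ->
  exists d0 : nat, forall d : nat, d0 <= d -> ~ unimodal (hmax n m d) d.
Proof.
move=> m3 mn; exists (8 * m + 8) => d led.
have halfd := double_half_bounds d.
set i := d./2.-1.
have dip := @hmax_low_decr n m d i m3 ltac:(lia) ltac:(lia) ltac:(lia).
have hi : hmax n m d i = hmax_low n m d i by rewrite /hmax ifT //; lia.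
have hiS : hmax n m d i.+1 = hmax_low n m d i.+1 by rewrite /hmax ifT //; lia.
apply: (@unimodal_valley _ d i i.+1 (d - i)).
- lia.
- exact: leq_subr.
- by rewrite hiS hi.
- by rewrite hmax_sym; [rewrite hi hiS | lia].
Qed.
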